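(* In the qubit–battery model with the ''copy'' interaction $U_{SB}$, let the battery be in the coherent state $|\alpha\rangle_B=e^{-\alpha^2/2}\sum_{n\ge0}\frac{\alpha^n}{\sqrt{n!}}|n\rangle_B$ with $\alpha>0$, whose mean energy is $\langle E\rangle=\omega\alpha^2$. Then, as $\alpha\to\infty$, $$\epsilon_C(\mathbf\Phi_{|\alpha\rangle},\mathcal V)=\frac{|V_{01}|^2}{4\alpha^2}+o(\alpha^{-2})=\frac{\omega|V_{01}|^2}{4\langle E\rangle}+o\big(\langle E\rangle^{-1}\big).$$
   Context: Qubit $S$ with $H_S=\frac\omega2(|1\rangle\langle1|-|0\rangle\langle0|)$; battery $B$ with basis $\{|n\rangle\}_{n\ge0}$ and $H_B=\omega\sum_n n|n\rangle\langle n|$. $V_S$ a qubit unitary, $V_{ij}=\langle i|V_S|j\rangle$, $\mathcal V(\cdot)=V_S\cdot V_S^\dagger$. ''Copy'' interaction: $U_{SB}=|0\rangle\langle0|_S\otimes|0\rangle\langle0|_B+\sum_{n\ge1}\sum_{i,j\in\{0,1\}}V_{ij}|i\rangle\langle j|_S\otimes|n-i\rangle\langle n-j|_B$. Channel $\mathbf\Phi_{|\beta\rangle}(\rho)=\mathrm{Tr}_B[U_{SB}(\rho\otimes|\beta\rangle\langle\beta|)U_{SB}^\dagger]$ with Kraus operators $K^{(n)}={}_B\langle n|U_{SB}|\beta\rangle$; Choi infidelity $\epsilon_C=1-\frac14\sum_n|\mathrm{Tr}[V_S^\dagger K^{(n)}]|^2$. *)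

From HB Require Import structures.
From mathcomp Require Import all_boot all_order all_algebra.
From mathcomp Require Import complex.
From mathcomp Require Import all_classical all_reals all_analysis.
From mathcomp Require Import zify.
Set Implicit Arguments. Unset Strict Implicit. Unset Printing Implicit Defensive.
Import Order.TTheory GRing.Theory Num.Theory.
Import numFieldNormedType.Exports.
Local Open Scope ring_scope.
Local Open Scope complex_scope.

Section QubitBattery.
Variable R : realType.

Definition sqmod (z : R[i]) : R := (complex.Re z) ^+ 2 + (complex.Im z) ^+ 2.

Definition adjmx (V : 'M[R[i]]_2) : 'M[R[i]]_2 := (map_mx conjc V)^T.

Definition unitary (V : 'M[R[i]]_2) : Prop := adjmx V *m V = 1%:M.

(* amplitudes of the coherent state |alpha> : e^{-a^2/2} a^n / sqrt(n!) *)
Definition coh (a : R) (n : nat) : R :=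
  expR (- (a ^+ 2) / 2) * a ^+ n / Num.sqrt (n`!)%:R.

(* matrix element  <i|_S <m|_B  U_SB  |j>_S |k>_B  of the copy interaction
   U_SB = |0><0| (x) |0><0| + sum_{n>=1} sum_{i,j} V_ij |i><j| (x) |n-i><n-j|.
   The second term contributes iff n := m + i >= 1 and k = n - j. *)
Definition Uel (V : 'M[R[i]]_2) (i : 'I_2) (m : nat) (j : 'I_2) (k : nat) : R[i] :=
  (if [&& i == 0 :> nat, j == 0 :> nat, m == 0 & k == 0] then 1 else 0)
  + (if (0 < m + i)%N && (k + j == m + i)%N then V i j else 0).

Lemma Uel_out V i m j k : (m.+2 <= k)%N -> Uel V i m j k = 0.
Proof.
move=> hk; rewrite /Uel.
have -> : [&& i == 0 :> nat, j == 0 :> nat, m == 0 & k == 0] = false.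
  by apply/negbTE; apply/negP => /and4P [_ _ _ /eqP]; lia.
have -> : (k + j == m + i)%N = false.
  by apply/negbTE/eqP; have := ltn_ord i; have := ltn_ord j; lia.
by rewrite andbF addr0.
Qed.

(* Kraus operator K^{(m)} = <m|_B U_SB |alpha>_B ; the sum over the battery
   basis k is finite since Uel V i m j k = 0 for k >= m+2 (Uel_out). *)
Definition kraus (V : 'M[R[i]]_2) (a : R) (m : nat) : 'M[R[i]]_2 :=
  \matrix_(i, j) \sum_(k < m.+2) Uel V i m j k * (coh a k)%:C.

Definition choi_infid (V : 'M[R[i]]_2) (a : R) : R :=
  1 - 4^-1 * \big[+%R/0%R]_(0 <= n <oo) sqmod (\tr (adjmx V *m kraus V a n)).

End QubitBattery.

From HB Require Import structures.
From mathcomp Require Import all_boot all_order all_algebra.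
From mathcomp Require Import complex.
From mathcomp Require Import all_classical all_reals all_analysis.
From mathcomp Require Import ring lra zify.
Import Order.TTheory GRing.Theory Num.Theory.
Import numFieldNormedType.Exports.
Local Open Scope classical_set_scope.
Local Open Scope ring_scope.

(* With c_n = coh a n the amplitudes of |a>, the Kraus trace at level n >= 1 is
   c_n (|V00|^2 + |V11|^2) + |V01|^2 c_(n-1) + |V10|^2 c_(n+1); by unitarity it equals
   c_n (2 (1 - p) + p (sqrt n / a + a / sqrt (n+1))) with p = |V01|^2.  Since c_n^2
   is the Poisson(a^2) weight, the Choi fidelity is a Poisson mean of the square of
   this factor, which is explicit except for the means of a / sqrt (n+1) and of
   sqrt (n / (n+1)).  Sandwiching these between functions whose Poisson means are
   explicit gives 1 - 1/(8 a^2) and 1 - 1/(2 a^2) up to O(a^-4), and the fidelity is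
   1 - p/(4 a^2) + O(a^-4).  The level n = 0, where the interaction acts as
   |0><0| (x) |0><0|, contributes only O(a^2 exp(-a^2)). *)

Lemma addr_natr_neq0 {R : numDomainType} (c : R) n : 0 < c -> c + n%:R != 0.
Proof. by move=> c0; rewrite gt_eqF // (lt_le_trans c0) // lerDl ler0n. Qed.

Lemma big_ord2 (T : nmodType) (F : 'I_2 -> T) : \sum_(i < 2) F i = F 0 + F 1.
Proof. by rewrite !big_ord_recl big_ord0 addr0; congr (_ + F _); apply/val_inj. Qed.

(* Both polynomials in [y^2] and [y^-2] agree with [1/y] to third order at [y = 1]
   (the differences carry the factor [(y - 1)^4]); their Poisson means are explicit
   when [y^2 = (n+1)/a^2]. *)
Lemma invr_le_poly {R : realFieldType} (y : R) : 0 < y ->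
  y^-1 <= (15 - 5 * y ^+ 2 + y ^+ 4 + 5 / y ^+ 2) / 16.
Proof.
move=> y0; rewrite -subr_ge0.
have -> : (15 - 5 * y ^+ 2 + y ^+ 4 + 5 / y ^+ 2) / 16 - y^-1 =
    ((y - 1) ^+ 2) ^+ 2 * (y ^+ 2 + 4 * y + 5) / (16 * y ^+ 2).
  by field; rewrite gt_eqF.
apply: divr_ge0; last by rewrite mulr_ge0 ?sqr_ge0.
by rewrite mulr_ge0 ?sqr_ge0 // !addr_ge0 ?sqr_ge0 ?mulr_ge0 // ltW.
Qed.

Lemma poly_le_invr {R : realFieldType} (y : R) : 0 < y ->
  (35 - 35 * y ^+ 2 + 21 * y ^+ 4 - 5 * y ^+ 6) / 16 <= y^-1.
Proof.
move=> y0; rewrite -subr_ge0.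
have -> : y^-1 - (35 - 35 * y ^+ 2 + 21 * y ^+ 4 - 5 * y ^+ 6) / 16 =
    ((y - 1) ^+ 2) ^+ 2 * (5 * y ^+ 3 + 20 * y ^+ 2 + 29 * y + 16) / (16 * y).
  by field; rewrite gt_eqF.
apply: divr_ge0; last by rewrite mulr_ge0 // ltW.
by rewrite mulr_ge0 ?sqr_ge0 // !addr_ge0 ?mulr_ge0 ?exprn_ge0 // ltW.
Qed.

Lemma sqrt_1subr_bounds {R : rcfType} (t : R) : 0 <= t <= 1 ->
  1 - t / 2 - t ^+ 2 / 2 <= Num.sqrt (1 - t) <= 1 - t / 2.
Proof.
case/andP=> t0 t1; apply/andP; split.
  case: (lerP (1 - t / 2 - t ^+ 2 / 2) 0) => [neg|pos].
    exact: le_trans neg (sqrtr_ge0 _).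
  rewrite -[X in X <= _]gtr0_norm // -sqrtr_sqr ler_sqrt ?subr_ge0 // -subr_ge0.
  have -> : 1 - t - (1 - t / 2 - t ^+ 2 / 2) ^+ 2 = t ^+ 2 * ((1 - t) * (3 + t)) / 4.
    by field.
  by rewrite !mulr_ge0 ?sqr_ge0 ?subr_ge0 // addr_ge0.
rewrite -[X in _ <= X]ger0_norm; last by lra.
by rewrite -sqrtr_sqr ler_sqrt; [nra | apply: sqr_ge0].
Qed.

Lemma cube_mul_expRN_le {R : realType} (x : R) : 0 <= x -> x ^+ 3 * expR (- x) <= 6.
Proof.
move=> x0; have := expR_ge1Dxn 2 x0; rewrite (_ : 3`! = 6)%N // expRN => h.
rewrite -(ler_pM2r (expR_gt0 x)) -mulrA mulVf ?gt_eqF ?expR_gt0 // mulr1.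
lra.
Qed.

Lemma cvg_pinfty0_sqr_bound {R : realType} (f : R -> R) (K : R) :
  (forall a, 1 <= a -> `|f a| <= K / a ^+ 2) -> f a @[a --> +oo] --> (0 : R).
Proof.
move=> bound; apply/cvgrPdist_lt => eps eps0; near=> a.
have a1 : 1 <= a by near: a; apply: nbhs_pinfty_ge; rewrite num_real.
have aK : `|K| / eps < a by near: a; apply: nbhs_pinfty_gt; rewrite num_real.
have a0 : 0 < a by apply: lt_le_trans a1.
rewrite sub0r normrN; apply: le_lt_trans (bound a a1) _.
rewrite ltr_pdivrMr ?exprn_gt0 //; rewrite ltr_pdivrMr // in aK.
have : a <= a ^+ 2 by rewrite expr2 ler_peMl // ltW.
have := ler_norm K; nra.
Unshelve. all: by end_near.
Qed.

Section poisson_mean.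
Context {R : realType} {l : R}.
Hypothesis l_gt0 : 0 < l.
Implicit Types (h g : nat -> R) (v : R).

Lemma poisson_pmfE n : poisson_pmf l n = l ^+ n / n`!%:R * expR (- l).
Proof. by rewrite /poisson_pmf l_gt0. Qed.

Lemma poisson_pmf0 : poisson_pmf l 0 = expR (- l).
Proof. by rewrite poisson_pmfE expr0 fact0 divr1 mul1r. Qed.

Lemma poisson_pmfS n : poisson_pmf l n.+1 * n.+1%:R = l * poisson_pmf l n.
Proof.
rewrite !poisson_pmfE factS natrM exprS.
have : n.+1%:R != 0 :> R by rewrite pnatr_eq0.
have : n`!%:R != 0 :> R by rewrite pnatr_eq0 -lt0n fact_gt0.
by move=> ? ?; field; apply/andP.
Qed.

Definition has_poisson_mean (rate : R) h v :=
  series (fun n => poisson_pmf rate n * h n) @ \oo --> v.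

Lemma has_poisson_mean_eq {h1 h2 v1 v2} : (forall n, h1 n = h2 n) -> v1 = v2 ->
  has_poisson_mean l h1 v1 -> has_poisson_mean l h2 v2.
Proof. by move=> /funext eh <-; rewrite /has_poisson_mean eh. Qed.

Lemma has_poisson_mean1 : has_poisson_mean l (fun=> 1) 1.
Proof.
rewrite /has_poisson_mean.
have -> : series (fun n => poisson_pmf l n * 1) =
    (fun N => expR (- l) * series (exp_coeff l) N).
  apply/funext => N; rewrite /series /= big_distrr; apply: eq_bigr => n _.
  by rewrite mulr1 poisson_pmfE mulrC.
have -> : (1 : R) = expR (- l) * expR l by rewrite -expRD addNr expR0.
by apply: cvgMl_tmp; exact: is_cvg_series_exp_coeff.
Qed.

Lemma has_poisson_mean_lincomb k1 k2 {h1 h2 v1 v2} :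
  has_poisson_mean l h1 v1 -> has_poisson_mean l h2 v2 ->
  has_poisson_mean l (fun n => k1 * h1 n + k2 * h2 n) (k1 * v1 + k2 * v2).
Proof.
move=> c1 c2; rewrite /has_poisson_mean.
have -> : series (fun n => poisson_pmf l n * (k1 * h1 n + k2 * h2 n)) =
    (fun N => k1 * series (fun n => poisson_pmf l n * h1 n) N
            + k2 * series (fun n => poisson_pmf l n * h2 n) N).
  apply/funext => N; rewrite /series /= !big_distrr -big_split /=.
  by apply: eq_bigr => n _; ring.
by apply: cvgD; apply: cvgMl_tmp.
Qed.

Lemma has_poisson_mean_le {h1 h2 v1 v2} :
  has_poisson_mean l h1 v1 -> has_poisson_mean l h2 v2 ->
  (forall n, h1 n <= h2 n) -> v1 <= v2.
Proof.
move=> c1 c2 le12; apply: (ler_cvg_to c1 c2); apply: nearW => N.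
by apply: ler_sum => n _; apply: ler_wpM2l; rewrite ?poisson_pmf_ge0.
Qed.

Lemma has_poisson_mean_dom {h g vg} : (forall n, 0 <= h n <= g n) ->
  has_poisson_mean l g vg -> exists v, has_poisson_mean l h v.
Proof.
move=> hg cg; apply/cvg_ex.
apply: (@series_le_cvg _ _ (fun n => poisson_pmf l n * g n)) => [n|n|n|].
- by rewrite mulr_ge0 ?poisson_pmf_ge0 //; case/andP: (hg n).
- by rewrite mulr_ge0 ?poisson_pmf_ge0 //; case/andP: (hg n) => /le_trans; apply.
- by rewrite ler_wpM2l ?poisson_pmf_ge0 //; case/andP: (hg n).
- by apply/cvg_ex; exists vg.
Qed.

Lemma has_poisson_mean_mulnS {h v} : has_poisson_mean l (fun n => h n.+1) v ->
  has_poisson_mean l (fun n => n%:R * h n) (l * v).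
Proof.
move=> c; rewrite /has_poisson_mean -cvg_shiftS.
have -> : [sequence series (fun n => poisson_pmf l n * (n%:R * h n)) n.+1]_n =
    (fun N => l * series (fun n => poisson_pmf l n * h n.+1) N).
  apply/funext => N; rewrite /series /= big_nat_recl // mul0r mulr0 add0r.
  by rewrite big_distrr /=; apply: eq_bigr => n _; rewrite mulrA poisson_pmfS mulrA.
exact: cvgMl_tmp.
Qed.

Lemma has_poisson_mean_divS {h v} : has_poisson_mean l h v ->
  has_poisson_mean l (fun n => l / n.+1%:R * h n.+1) (v - expR (- l) * h 0).
Proof.
rewrite /has_poisson_mean -poisson_pmf0 => c.
have -> : series (fun n => poisson_pmf l n * (l / n.+1%:R * h n.+1)) =
    (fun N => series (fun n => poisson_pmf l n * h n) N.+1 - poisson_pmf l 0 * h 0).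
  apply/funext => N; rewrite /series /= big_nat_recl // addrC addKr.
  apply: eq_bigr => n _; have n1 : n.+1%:R != 0 :> R by rewrite pnatr_eq0.
  have -> : poisson_pmf l n * (l / n.+1%:R * h n.+1) =
      l * poisson_pmf l n / n.+1%:R * h n.+1 by ring.
  by rewrite -poisson_pmfS mulfK.
by apply: cvgB; [rewrite (cvg_shiftS (series _)) | exact: cvg_cst].
Qed.

Lemma has_poisson_mean_natr : has_poisson_mean l (fun n => n%:R) l.
Proof.
apply: (has_poisson_mean_eq _ _ (has_poisson_mean_mulnS (h := fun=> 1) has_poisson_mean1)).
  by move=> n; rewrite mulr1.
by rewrite mulr1.
Qed.

Lemma has_poisson_mean_natr2 : has_poisson_mean l (fun n => n%:R ^+ 2) (l ^+ 2 + l).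
Proof.
have natS : has_poisson_mean l (fun n => n.+1%:R) (l + 1).
  apply: (has_poisson_mean_eq _ _
    (has_poisson_mean_lincomb 1 1 has_poisson_mean_natr has_poisson_mean1)).
    by move=> n; rewrite -natr1; ring.
  by ring.
apply: (has_poisson_mean_eq _ _ (has_poisson_mean_mulnS (h := fun n => n%:R) natS)).
  by move=> n; rewrite expr2.
by ring.
Qed.

Lemma has_poisson_mean_natr3 :
  has_poisson_mean l (fun n => n%:R ^+ 3) (l ^+ 3 + 3 * l ^+ 2 + l).
Proof.
have natS2 : has_poisson_mean l (fun n => n.+1%:R ^+ 2) (l ^+ 2 + 3 * l + 1).
  apply: (has_poisson_mean_eq _ _ (has_poisson_mean_lincomb 1 1 has_poisson_mean_natr2
    (has_poisson_mean_lincomb 2 1 has_poisson_mean_natr has_poisson_mean1))).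
    by move=> n; rewrite -natr1; ring.
  by ring.
apply: (has_poisson_mean_eq _ _
  (has_poisson_mean_mulnS (h := fun n => n%:R ^+ 2) natS2)).
  by move=> n; ring.
by ring.
Qed.

Lemma has_poisson_mean_cubic_natS c0 c1 c2 c3 :
  has_poisson_mean l
    (fun n => c0 + c1 * n.+1%:R + c2 * n.+1%:R ^+ 2 + c3 * n.+1%:R ^+ 3)
    (c0 + c1 * (l + 1) + c2 * (l ^+ 2 + 3 * l + 1)
       + c3 * (l ^+ 3 + 6 * l ^+ 2 + 7 * l + 1)).
Proof.
have := has_poisson_mean_lincomb 1 1
  (has_poisson_mean_lincomb (c0 + c1 + c2 + c3) (c1 + 2 * c2 + 3 * c3)
     has_poisson_mean1 has_poisson_mean_natr)
  (has_poisson_mean_lincomb (c2 + 3 * c3) c3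
     has_poisson_mean_natr2 has_poisson_mean_natr3).
apply: has_poisson_mean_eq => [n|]; last by ring.
by rewrite -natr1; ring.
Qed.

Lemma has_poisson_mean_invS :
  has_poisson_mean l (fun n => n.+1%:R^-1) ((1 - expR (- l)) / l).
Proof.
have l_neq0 : l != 0 by rewrite gt_eqF.
have := has_poisson_mean_lincomb l^-1 0
  (has_poisson_mean_divS has_poisson_mean1) has_poisson_mean1.
apply: has_poisson_mean_eq => [n|]; last by field.
by field; rewrite addr_natr_neq0.
Qed.

Lemma has_poisson_mean_invSS :
  has_poisson_mean l (fun n => (n.+1%:R * n.+2%:R)^-1)
    ((1 - expR (- l) - l * expR (- l)) / l ^+ 2).
Proof.
have l_neq0 : l != 0 by rewrite gt_eqF.
have := has_poisson_mean_lincomb l^-1 0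
  (has_poisson_mean_divS has_poisson_mean_invS) has_poisson_mean1.
apply: has_poisson_mean_eq => [n|]; last by field.
by field; rewrite !addr_natr_neq0.
Qed.

End poisson_mean.

Section copy_interaction.
Context {R : realType}.
Local Open Scope complex_scope.
Implicit Types (z w : R[i]) (V K : 'M[R[i]]_2).

Lemma sqmodC (x : R) : sqmod x%:C = x ^+ 2.
Proof. by rewrite /sqmod /= expr0n addr0. Qed.

Lemma sqmod_ge0 z : 0 <= sqmod z.
Proof. by rewrite addr_ge0 ?sqr_ge0. Qed.

Lemma sqmodM z w : sqmod (z * w) = sqmod z * sqmod w.
Proof. by case: z w => [x y] [u v]; rewrite /sqmod /=; ring. Qed.

Lemma sqmod_mulC z (c : R) : sqmod (z * c%:C) = sqmod z * c ^+ 2.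
Proof. by rewrite sqmodM sqmodC. Qed.

Lemma sqmodN z : sqmod (- z) = sqmod z.
Proof. by case: z => x y; rewrite /sqmod /= !sqrrN. Qed.

Lemma sqmod_conjc z : sqmod z^* = sqmod z.
Proof. by case: z => x y; rewrite /sqmod /= sqrrN. Qed.

Lemma sqmodD_le z w : sqmod (z + w) <= 2 * (sqmod z + sqmod w).
Proof.
case: z w => [x y] [u v]; rewrite /sqmod /= -subr_ge0.
have -> : 2 * (x ^+ 2 + y ^+ 2 + (u ^+ 2 + v ^+ 2)) - ((x + u) ^+ 2 + (y + v) ^+ 2)
  = (x - u) ^+ 2 + (y - v) ^+ 2 by ring.
by rewrite addr_ge0 ?sqr_ge0.
Qed.

Lemma mul_conjc z : z^* * z = (sqmod z)%:C.
Proof.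
case: z => x y; rewrite /sqmod /=.
by apply/eqP; rewrite eq_complex /=; apply/andP; split; apply/eqP; ring.
Qed.

Lemma conjc_mulC z (c : R) : z^* * (z * c%:C) = (sqmod z * c)%:C.
Proof. by rewrite mulrA mul_conjc -rmorphM. Qed.

Lemma mul_adjmxE V K i j : (adjmx V *m K) i j = (V 0 i)^* * K 0 j + (V 1 i)^* * K 1 j.
Proof. by rewrite !mxE big_ord2 /adjmx !mxE. Qed.

Lemma mxtrace_mul_adjmx V K : \tr (adjmx V *m K) =
  (V 0 0)^* * K 0 0 + (V 1 0)^* * K 1 0 + ((V 0 1)^* * K 0 1 + (V 1 1)^* * K 1 1).
Proof. by rewrite /mxtrace big_ord2 !mul_adjmxE. Qed.

(* Unitarity gives unit columns and orthogonal columns; the latter forces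
   |V00| |V01| = |V10| |V11|, hence |V01| = |V10|. *)
Lemma unitary_sqmod {V} : unitary V ->
  [/\ sqmod (V 0 0) = 1 - sqmod (V 0 1), sqmod (V 1 1) = 1 - sqmod (V 0 1)
    & sqmod (V 1 0) = sqmod (V 0 1)].
Proof.
move=> U.
have entry i j : (V 0 i)^* * V 0 j + (V 1 i)^* * V 1 j = (i == j)%:R.
  by rewrite -mul_adjmxE U mxE.
have col_norm i : sqmod (V 0 i) + sqmod (V 1 i) = 1.
  have := congr1 (@complex.Re R) (entry i i).
  by rewrite eqxx !mul_conjc.
have orth : sqmod (V 0 0) * sqmod (V 0 1) = sqmod (V 1 0) * sqmod (V 1 1).
  move/eqP: (entry 0 1); rewrite /= addr_eq0 => /eqP/(congr1 (@sqmod R)).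
  by rewrite sqmodN !sqmodM !sqmod_conjc.
have c0 := col_norm 0; have c1 := col_norm 1.
have e10 : sqmod (V 1 0) = sqmod (V 0 1) by nra.
by split; lra.
Qed.

Lemma kraus_succE V a m i j :
  kraus V a m.+1 i j = V i j * (coh a (m.+1 + i - j))%:C.
Proof.
have lt_ij : (m.+1 + i - j < m.+3)%N by have := ltn_ord i; have := ltn_ord j; lia.
rewrite /kraus mxE (eq_bigr (fun k : 'I_m.+3 =>
  if (k : nat) == (m.+1 + i - j)%N then V i j * (coh a k)%:C else 0)).
  by rewrite -big_mkcond (big_ord1_eq _ (fun k : nat => V i j * (coh a k)%:C)) lt_ij.
move=> k _; rewrite /Uel /= !andbF add0r.
have -> : (k + j == m.+1 + i)%N = ((k : nat) == (m.+1 + i - j)%N).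
  by apply/eqP/eqP; have := ltn_ord i; have := ltn_ord j; lia.
by case: ifP; rewrite ?mul0r.
Qed.

Lemma tr_kraus_succ V a m : \tr (adjmx V *m kraus V a m.+1) =
  ((sqmod (V 0 0) + sqmod (V 1 1)) * coh a m.+1 + sqmod (V 0 1) * coh a m
    + sqmod (V 1 0) * coh a m.+2)%:C.
Proof.
rewrite mxtrace_mul_adjmx !kraus_succE !conjc_mulC -!rmorphD /=.
rewrite (modn_small (isT : (1 < 2)%N)) !subn0 addnK !addn0 addn1 subn1 /=.
by congr (_%:C); ring.
Qed.

Lemma tr_kraus0 V a : \tr (adjmx V *m kraus V a 0) =
  (V 0 0)^* * (coh a 0)%:C + (sqmod (V 1 0) * coh a 1 + sqmod (V 1 1) * coh a 0)%:C.
Proof.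
rewrite mxtrace_mul_adjmx /kraus !mxE !big_ord_recl !big_ord0 /Uel /= /bump /=.
by rewrite !(add0r, addr0, mul0r, mul1r, mulr0) !conjc_mulC -addrA rmorphD.
Qed.

Definition ratio_up (a : R) n := a / Num.sqrt n.+1%:R.
Definition ratio_dn (a : R) n := Num.sqrt n%:R / a.

Lemma coh_ge0 (a : R) n : 0 <= a -> 0 <= coh a n.
Proof. by move=> a0; rewrite /coh !mulr_ge0 ?expR_ge0 ?invr_ge0 ?sqrtr_ge0 ?exprn_ge0. Qed.

Lemma coh_sqr (a : R) n : 0 < a -> coh a n ^+ 2 = poisson_pmf (a ^+ 2) n.
Proof.
move=> a0; rewrite poisson_pmfE ?exprn_gt0 // /coh !exprMn exprVn sqr_sqrtr //.
rewrite -expRM_natr -!exprM mulnC exprM.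
have -> : - a ^+ 2 / 2 * 2 = - a ^+ 2 :> R by rewrite divfK // pnatr_eq0.
by rewrite -exprM mulnC exprM expr2; ring.
Qed.

Lemma coh_succ (a : R) n : coh a n.+1 = coh a n * ratio_up a n.
Proof.
rewrite /coh /ratio_up factS natrM sqrtrM // [a ^+ n.+1]exprS.
have : Num.sqrt n.+1%:R != 0 :> R by rewrite sqrtr_eq0 -ltNge ltr0n.
have : Num.sqrt n`!%:R != 0 :> R by rewrite sqrtr_eq0 -ltNge ltr0n fact_gt0.
by move=> ? ?; field; apply/andP.
Qed.

Lemma coh_pred (a : R) n : a != 0 -> coh a n = coh a n.+1 * ratio_dn a n.+1.
Proof.
move=> a_neq0; rewrite coh_succ /ratio_up /ratio_dn.
have : Num.sqrt n.+1%:R != 0 :> R by rewrite sqrtr_eq0 -ltNge ltr0n.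
by move=> ?; field; apply/andP.
Qed.

Definition overlap_factor (p a : R) n := 2 * (1 - p) + p * (ratio_dn a n + ratio_up a n).

Lemma sqmod_tr_kraus_succ V a n : unitary V -> 0 < a ->
  sqmod (\tr (adjmx V *m kraus V a n.+1)) =
  poisson_pmf (a ^+ 2) n.+1 * overlap_factor (sqmod (V 0 1)) a n.+1 ^+ 2.
Proof.
move=> /unitary_sqmod [h00 h11 h10] a0.
rewrite tr_kraus_succ h00 h11 h10 sqmodC -coh_sqr // (coh_succ a n.+1).
rewrite (coh_pred a n (lt0r_neq0 a0)).
by rewrite /overlap_factor; ring.
Qed.

Lemma unitary_sqmod01_bounds {V} : unitary V -> 0 <= sqmod (V 0 1) <= 1.
Proof. by move=> /unitary_sqmod[h00 _ _]; rewrite sqmod_ge0 -subr_ge0 -h00 sqmod_ge0. Qed.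

Lemma sqmod_tr_kraus0_le {V a} : unitary V -> 1 <= a ->
  sqmod (\tr (adjmx V *m kraus V a 0)) <= 10 * (a ^+ 2 * expR (- a ^+ 2)).
Proof.
move=> U a1; have a0 : 0 < a by apply: lt_le_trans a1.
have [h00 h11 h10] := unitary_sqmod U.
have /andP[p0 p1] := unitary_sqmod01_bounds U.
have l1 : 1 <= a ^+ 2 by rewrite expr_ge1 // ltW.
have c0_sqr : coh a 0 ^+ 2 = expR (- a ^+ 2) by rewrite coh_sqr // poisson_pmf0 ?exprn_gt0.
have c1_sqr : coh a 1 ^+ 2 = a ^+ 2 * expR (- a ^+ 2).
  by rewrite coh_sqr // poisson_pmfE ?exprn_gt0 // expr1 (_ : 1`! = 1)%N // divr1.
rewrite tr_kraus0 h10 h11; apply: le_trans (sqmodD_le _ _) _.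
rewrite sqmod_mulC sqmod_conjc sqmodC h00 c0_sqr.
set p := sqmod (V 0 1) in p0 p1 *; set c0 := coh a 0 in c0_sqr *; set c1 := coh a 1 in c1_sqr *.
have convex : (p * c1 + (1 - p) * c0) ^+ 2 <= p * c1 ^+ 2 + (1 - p) * c0 ^+ 2.
  rewrite -subr_ge0 (_ : _ - _ = p * (1 - p) * (c1 - c0) ^+ 2); last by ring.
  by rewrite mulr_ge0 ?sqr_ge0 // mulr_ge0 // subr_ge0.
rewrite c1_sqr c0_sqr in convex.
have e0 := expR_ge0 (- a ^+ 2).
by nra.
Qed.
End copy_interaction.

Section ratio_moments.
Context {R : realType} {a : R}.
Hypothesis a_gt0 : 0 < a.
Local Notation l := (a ^+ 2).

Let a_neq0 : a != 0. Proof. exact: lt0r_neq0. Qed.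
Let l_gt0 : 0 < l. Proof. exact: exprn_gt0. Qed.
Let l_neq0 : l != 0. Proof. exact: lt0r_neq0. Qed.
Let sqrtS_neq0 n : Num.sqrt n.+1%:R != 0 :> R.
Proof. by rewrite gt_eqF // sqrtr_gt0 ltr0n. Qed.

Let sqr_ratio_up n : ratio_up a n ^+ 2 = l / n.+1%:R.
Proof. by rewrite /ratio_up exprMn exprVn sqr_sqrtr. Qed.

Lemma has_poisson_mean_ratio_dn {Er} :
  has_poisson_mean l (ratio_up a) Er -> has_poisson_mean l (ratio_dn a) Er.
Proof.
move=> up.
have upS : has_poisson_mean l (fun n => (a * Num.sqrt n.+1%:R)^-1) (Er / l).
  apply: (has_poisson_mean_eq _ _
    (has_poisson_mean_lincomb l^-1 0 up (has_poisson_mean1 l_gt0))).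
    by move=> n; rewrite /ratio_up; field; rewrite sqrtS_neq0 a_neq0.
  by field.
have := has_poisson_mean_mulnS l_gt0 (h := fun n => (a * Num.sqrt n%:R)^-1) upS.
apply: has_poisson_mean_eq => [[|n]|]; last by field.
  by rewrite /ratio_dn sqrtr0 !mul0r.
rewrite /ratio_dn -{1}(sqr_sqrtr (ler0n R n.+1)).
by field; rewrite sqrtS_neq0 a_neq0.
Qed.

Lemma has_poisson_mean_sqr_ratio_dn :
  has_poisson_mean l (fun n => ratio_dn a n ^+ 2) 1.
Proof.
apply: (has_poisson_mean_eq _ _ (has_poisson_mean_lincomb l^-1 0
  (has_poisson_mean_natr l_gt0) (has_poisson_mean1 l_gt0))); last by field.
by move=> n; rewrite /ratio_dn exprMn sqr_sqrtr ?ler0n // exprVn; field.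
Qed.

Lemma has_poisson_mean_sqr_ratio_up :
  has_poisson_mean l (fun n => ratio_up a n ^+ 2) (1 - expR (- l)).
Proof.
apply: (has_poisson_mean_eq _ _ (has_poisson_mean_lincomb l 0
  (has_poisson_mean_invS l_gt0) (has_poisson_mean1 l_gt0))); last by field.
by move=> n; rewrite sqr_ratio_up; field; rewrite addr_natr_neq0.
Qed.

Let y n := Num.sqrt n.+1%:R / a.

Let y_gt0 n : 0 < y n.
Proof. by rewrite divr_gt0 // sqrtr_gt0 ltr0n. Qed.

Let sqr_y n : y n ^+ 2 = n.+1%:R / l.
Proof. by rewrite exprMn sqr_sqrtr // exprVn. Qed.

Let ratio_upE n : ratio_up a n = (y n)^-1.
Proof. by rewrite /ratio_up invf_div. Qed.

Let upper n := (15 - 5 * y n ^+ 2 + y n ^+ 4 + 5 / y n ^+ 2) / 16.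
Let lower n := (35 - 35 * y n ^+ 2 + 21 * y n ^+ 4 - 5 * y n ^+ 6) / 16.

Let mean_upper :
  has_poisson_mean l upper (1 - (1 / 8 - 1 / (16 * l) + 5 * l * expR (- l) / 16) / l).
Proof.
apply: (has_poisson_mean_eq _ _ (has_poisson_mean_lincomb 1 (5 * l / 16)
  (has_poisson_mean_cubic_natS l_gt0 (15 / 16) (- 5 / (16 * l)) (1 / (16 * l ^+ 2)) 0)
  (has_poisson_mean_invS l_gt0))); last by field.
move=> n; rewrite /upper (exprM _ 2 2) sqr_y.
by field; rewrite a_neq0 addr_natr_neq0.
Qed.

Let mean_lower :
  has_poisson_mean l lower (1 - (1 / 8 + 14 / (16 * l) + 5 / (16 * l ^+ 2)) / l).
Proof.
apply: (has_poisson_mean_eq _ _ (has_poisson_mean_cubic_natS l_gt0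
  (35 / 16) (- 35 / (16 * l)) (21 / (16 * l ^+ 2)) (- 5 / (16 * l ^+ 3)))).
  by move=> n; rewrite /lower (exprM _ 2 2) (exprM _ 2 3) sqr_y; field.
by field.
Qed.

Lemma has_poisson_mean_ratio_up_ex : exists Er, has_poisson_mean l (ratio_up a) Er.
Proof.
apply: (has_poisson_mean_dom _ mean_upper) => n.
by rewrite ratio_upE invr_ge0 ltW ?invr_le_poly.
Qed.

Lemma has_poisson_mean_ratio_up_bounds {Er} : 1 <= a ->
  has_poisson_mean l (ratio_up a) Er -> 1 / 8 - l^-1 <= l * (1 - Er) <= 1 / 8 + 2 / l.
Proof.
move=> a1 up; have l1 : 1 <= l by rewrite expr_ge1 // ltW.
set X := 1 / 8 - 1 / (16 * l) + 5 * l * expR (- l) / 16.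
set Y := 1 / 8 + 14 / (16 * l) + 5 / (16 * l ^+ 2).
have le_up : Er <= 1 - X / l.
  by apply: (has_poisson_mean_le up mean_upper) => n; rewrite ratio_upE invr_le_poly.
have up_le : 1 - Y / l <= Er.
  by apply: (has_poisson_mean_le mean_lower up) => n; rewrite ratio_upE poly_le_invr.
have lowX : X <= l * (1 - Er).
  rewrite -subr_ge0 (_ : _ - X = l * (1 - X / l - Er)); last by field.
  by rewrite mulr_ge0 ?subr_ge0 // ltW.
have upY : l * (1 - Er) <= Y.
  rewrite -subr_ge0 (_ : _ - _ = l * (Er - (1 - Y / l))); last by field.
  by rewrite mulr_ge0 ?subr_ge0 // ltW.
have il_gt0 : 0 < l^-1 by rewrite invr_gt0.
have il_le1 : l^-1 <= 1 by rewrite invf_le1.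
have : 0 <= l * expR (- l) by rewrite mulr_ge0 ?expR_ge0 // ltW.
have : l^-1 * l^-1 <= l^-1 by rewrite ger_pMl.
rewrite /X /Y in lowX upY.
rewrite (_ : 1 / (16 * l) = l^-1 / 16) in lowX; last by field.
rewrite (_ : 14 / (16 * l) = 14 * l^-1 / 16) in upY; last by field.
rewrite (_ : 5 / (16 * l ^+ 2) = 5 * (l^-1 * l^-1) / 16) in upY; last by field.
by lra.
Qed.

Lemma ratio_dn_mul_up n : ratio_dn a n * ratio_up a n = Num.sqrt (1 - n.+1%:R^-1).
Proof.
have -> : 1 - n.+1%:R^-1 = n%:R * n.+1%:R^-1 :> R.
  by field; rewrite addr_natr_neq0.
rewrite sqrtrM // sqrtrV // /ratio_dn /ratio_up.
by field; rewrite a_neq0 sqrtS_neq0.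
Qed.

Let invS_bounds n : 0 <= (n.+1%:R^-1 : R) <= 1.
Proof. by rewrite invr_ge0 ler0n invf_le1 // ?ler1n ?ltr0n. Qed.

Let mean_prod_upper :
  has_poisson_mean l (fun n => 1 - n.+1%:R^-1 / 2) (1 - (1 - expR (- l)) / (2 * l)).
Proof.
apply: (has_poisson_mean_eq _ _ (has_poisson_mean_lincomb 1 (- 1 / 2)
  (has_poisson_mean1 l_gt0) (has_poisson_mean_invS l_gt0))) => [n|]; by field.
Qed.

Let mean_prod_lower :
  has_poisson_mean l (fun n => 1 - n.+1%:R^-1 / 2 - (n.+1%:R * n.+2%:R)^-1)
    (1 - (1 - expR (- l)) / (2 * l) - (1 - expR (- l) - l * expR (- l)) / l ^+ 2).
Proof.
apply: (has_poisson_mean_eq _ _ (has_poisson_mean_lincomb 1 (- 1)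
  mean_prod_upper (has_poisson_mean_invSS l_gt0))) => [n|]; by ring.
Qed.

Lemma has_poisson_mean_ratio_prod_ex :
  exists Es, has_poisson_mean l (fun n => ratio_dn a n * ratio_up a n) Es.
Proof.
apply: (has_poisson_mean_dom _ (has_poisson_mean1 l_gt0)) => n.
rewrite ratio_dn_mul_up sqrtr_ge0 /=.
case/andP: (sqrt_1subr_bounds _ (invS_bounds n)).
by move=> _ /le_trans; apply.
Qed.

Lemma has_poisson_mean_ratio_prod_bounds {Es} : 1 <= a ->
  has_poisson_mean l (fun n => ratio_dn a n * ratio_up a n) Es ->
  - expR (- l) <= l * (1 - Es) - 1 / 2 <= l^-1.
Proof.
move=> a1 prod; have l1 : 1 <= l by rewrite expr_ge1 // ltW.
have le_up : Es <= 1 - (1 - expR (- l)) / (2 * l).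
  apply: (has_poisson_mean_le prod mean_prod_upper) => n.
  by rewrite ratio_dn_mul_up; case/andP: (sqrt_1subr_bounds _ (invS_bounds n)).
have up_le : 1 - (1 - expR (- l)) / (2 * l) - (1 - expR (- l) - l * expR (- l)) / l ^+ 2
    <= Es.
  apply: (has_poisson_mean_le mean_prod_lower prod) => n.
  rewrite ratio_dn_mul_up; case/andP: (sqrt_1subr_bounds _ (invS_bounds n)) => + _.
  apply: le_trans; rewrite lerD2l lerN2 -subr_ge0.
  have -> : (n.+1%:R * n.+2%:R)^-1 - n.+1%:R^-1 ^+ 2 / 2 =
      n%:R / (2 * n.+1%:R ^+ 2 * n.+2%:R) :> R.
    by field; rewrite !addr_natr_neq0.
  by rewrite divr_ge0 ?mulr_ge0 ?sqr_ge0.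
have e_ge0 : 0 <= expR (- l) by apply: expR_ge0.
have lowX : (1 - expR (- l)) / 2 <= l * (1 - Es).
  rewrite -subr_ge0 (_ : _ - _ = l * (1 - (1 - expR (- l)) / (2 * l) - Es)).
    by rewrite mulr_ge0 ?subr_ge0 // ltW.
  by field.
have upY : l * (1 - Es) <= (1 - expR (- l)) / 2 + (1 - expR (- l) - l * expR (- l)) / l.
  rewrite -subr_ge0 (_ : _ - _ = l * (Es - (1 - (1 - expR (- l)) / (2 * l)
      - (1 - expR (- l) - l * expR (- l)) / l ^+ 2))).
    by rewrite mulr_ge0 ?subr_ge0 // ltW.
  by field.
rewrite (_ : (1 - _ - _) / l = l^-1 - expR (- l) / l - expR (- l)) in upY;
  last by field.
have : 0 <= expR (- l) / l by rewrite divr_ge0 // ltW.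
by lra.
Qed.

Lemma has_poisson_mean_sqr_overlap_factor p {Er Es} :
  has_poisson_mean l (ratio_up a) Er ->
  has_poisson_mean l (fun n => ratio_dn a n * ratio_up a n) Es ->
  has_poisson_mean l (fun n => overlap_factor p a n ^+ 2)
    (4 * (1 - p) ^+ 2 + 8 * p * (1 - p) * Er + p ^+ 2 * (2 - expR (- l))
       + 2 * p ^+ 2 * Es).
Proof.
move=> up prod; have dn := has_poisson_mean_ratio_dn up.
have sum := has_poisson_mean_lincomb 1 1 (has_poisson_mean_lincomb 1 1
  (has_poisson_mean_lincomb (4 * (1 - p) ^+ 2) (4 * p * (1 - p))
     (has_poisson_mean1 l_gt0) dn)
  (has_poisson_mean_lincomb (4 * p * (1 - p)) (p ^+ 2) up has_poisson_mean_sqr_ratio_dn))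
  (has_poisson_mean_lincomb (p ^+ 2) (2 * p ^+ 2) has_poisson_mean_sqr_ratio_up prod).
by apply: (has_poisson_mean_eq _ _ sum) => [n|]; rewrite /overlap_factor; ring.
Qed.
End ratio_moments.

Lemma infidelity_remainder_le {R : realFieldType} {l e p A1 A2 G F : R} :
  1 <= l -> 0 <= p <= 1 -> 0 <= e -> l ^+ 3 * e <= 6 ->
  - l^-1 <= A1 <= 2 / l -> - e <= A2 <= l^-1 ->
  0 <= G <= 10 * (l * e) -> 0 <= F <= 9 * l ->
  `|8 * (p * (1 - p)) * A1 + 2 * p ^+ 2 * A2 + p ^+ 2 * (l * e) - l * G + l * e * F|
    <= 160 / l.
Proof.
move=> l1 /andP[p0 p1] e0 cube /andP[A1l A1u] /andP[A2l A2u] /andP[G0 Gu] /andP[F0 Fu].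
have l0 : 0 < l by apply: lt_le_trans l1.
set il := l^-1 in A1l A1u A2l A2u *; have il0 : 0 < il by rewrite invr_gt0.
have l2e : l ^+ 2 * e <= 6 * il.
  have <- : l ^+ 3 * e * il = l ^+ 2 * e by rewrite /il; field; rewrite gt_eqF.
  by rewrite ler_wpM2r // ltW.
have le0 : 0 <= l * e by rewrite mulr_ge0 // ltW.
have le_l2e : l * e <= l ^+ 2 * e by rewrite expr2 -mulrA; exact: ler_peMl.
have e_le : e <= l * e by exact: ler_peMl.
have q0 : 0 <= p * (1 - p) by rewrite mulr_ge0 ?subr_ge0.
have q1 : p * (1 - p) <= 1 by nra.
have pp1 : p ^+ 2 <= 1 by nra.
have T1 : - (16 * il) <= 8 * (p * (1 - p)) * A1 <= 16 * il by apply/andP; split; nra.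
have T2 : - (12 * il) <= 2 * p ^+ 2 * A2 <= 12 * il by apply/andP; split; nra.
have T3 : 0 <= p ^+ 2 * (l * e) <= 6 * il.
  rewrite mulr_ge0 ?sqr_ge0 //=; apply: le_trans l2e.
  by apply: le_trans le_l2e; rewrite ler_piMl.
have T4 : 0 <= l * G <= 60 * il.
  rewrite mulr_ge0 ?(ltW l0) //=; apply: le_trans (ler_wpM2l (ltW l0) Gu) _.
  by rewrite (_ : l * (10 * (l * e)) = 10 * (l ^+ 2 * e)); [lra | ring].
have T5 : 0 <= l * e * F <= 54 * il.
  rewrite mulr_ge0 //=; apply: le_trans (ler_wpM2l le0 Fu) _.
  by rewrite (_ : l * e * (9 * l) = 9 * (l ^+ 2 * e)); [lra | ring].
rewrite ler_norml.
move: T1 T2 T3 T4 T5 => /andP[? ?] /andP[? ?] /andP[? ?] /andP[? ?] /andP[? ?].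
by apply/andP; split; lra.
Qed.

Lemma infidelity_expansion_le {R : realFieldType} {l e p Er Es G F : R} :
  1 <= l -> 0 <= p <= 1 -> 0 <= e -> l ^+ 3 * e <= 6 ->
  1 / 8 - l^-1 <= l * (1 - Er) <= 1 / 8 + 2 / l ->
  - e <= l * (1 - Es) - 1 / 2 <= l^-1 ->
  0 <= G <= 10 * (l * e) -> 0 <= F <= 9 * l ->
  `|l * (1 - 4^-1 * (G - e * F + (4 * (1 - p) ^+ 2 + 8 * p * (1 - p) * Er
      + p ^+ 2 * (2 - e) + 2 * p ^+ 2 * Es))) - p / 4| <= 40 / l.
Proof.
move=> l1 p01 e0 cube Er_bounds Es_bounds G_bounds F_bounds.
have A1_bounds : - l^-1 <= l * (1 - Er) - 1 / 8 <= 2 / l by lra.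
have := infidelity_remainder_le l1 p01 e0 cube A1_bounds Es_bounds G_bounds F_bounds.
set X := (X in `|X| <= _) => bound.
rewrite (_ : _ - p / 4 = X / 4); last by rewrite /X; field.
rewrite normrM [`|4^-1|]ger0_norm ?invr_ge0 // ler_pdivrMr //.
by lra.
Qed.

Section choi_infidelity.
Context {R : realType}.
Implicit Types (V : 'M[R[i]]_2) (a : R).

Lemma choi_infidE {V a EF} : unitary V -> 0 < a ->
  has_poisson_mean (a ^+ 2) (fun n => overlap_factor (sqmod (V 0 1)) a n ^+ 2) EF ->
  choi_infid V a = 1 - 4^-1 * (sqmod (\tr (adjmx V *m kraus V a 0))
    - expR (- a ^+ 2) * overlap_factor (sqmod (V 0 1)) a 0 ^+ 2 + EF).
Proof.
move=> U a0 mean; have l0 : 0 < a ^+ 2 by rewrite exprn_gt0.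
set G := fun n => sqmod (\tr (adjmx V *m kraus V a n)).
set F := fun n => overlap_factor (sqmod (V 0 1)) a n ^+ 2.
suff : series G @ \oo --> G 0 - expR (- a ^+ 2) * F 0 + EF.
  by move/cvg_lim => <-.
rewrite -cvg_shiftS -(poisson_pmf0 l0).
have -> : [sequence series G n.+1]_n = (fun N => (G 0 - poisson_pmf (a ^+ 2) 0 * F 0)
    + series (fun n => poisson_pmf (a ^+ 2) n * F n) N.+1).
  apply/funext => N; rewrite /series /= !big_nat_recl // addrA subrK.
  by congr (_ + _); apply: eq_bigr => n _; rewrite /G sqmod_tr_kraus_succ.
by apply: cvgD; [exact: cvg_cst | rewrite (cvg_shiftS (series _))].
Qed.

Lemma choi_infid_estimate V a : unitary V -> 1 <= a ->
  `|a ^+ 2 * choi_infid V a - sqmod (V 0 1) / 4| <= 40 / a ^+ 2.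
Proof.
move=> U a1; have a0 : 0 < a by apply: lt_le_trans a1.
have [Er up] := has_poisson_mean_ratio_up_ex a0.
have [Es prod] := has_poisson_mean_ratio_prod_ex a0.
have p_bounds := unitary_sqmod01_bounds U.
have F0_bounds : 0 <= overlap_factor (sqmod (V 0 1)) a 0 ^+ 2 <= 9 * a ^+ 2.
  rewrite sqr_ge0 /overlap_factor /ratio_dn /ratio_up sqrtr0 sqrtr1 mul0r divr1 add0r.
  case/andP: p_bounds => p0 p1.
  have amp_ge0 : 0 <= 2 * (1 - sqmod (V 0 1)) + sqmod (V 0 1) * a by nra.
  have amp_le : 2 * (1 - sqmod (V 0 1)) + sqmod (V 0 1) * a <= 3 * a by nra.
  by rewrite (_ : 9 * a ^+ 2 = (3 * a) ^+ 2); [nra | ring].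
rewrite (choi_infidE U a0 (has_poisson_mean_sqr_overlap_factor a0 _ up prod)).
apply: infidelity_expansion_le p_bounds (expR_ge0 _) (cube_mul_expRN_le _ (sqr_ge0 a))
  (has_poisson_mean_ratio_up_bounds a0 a1 up)
  (has_poisson_mean_ratio_prod_bounds a0 a1 prod) _ F0_bounds.
- by rewrite expr_ge1 // ltW.
- by rewrite sqmod_ge0 sqmod_tr_kraus0_le.
Qed.

End choi_infidelity.

Theorem mainTheorem9 (R : realType) (V : 'M[R[i]]_2) (omega : R) :
  unitary V -> 0 < omega ->
  ((choi_infid V a - sqmod (V 0 1) / (4 * a ^+ 2)) / (a ^+ 2)^-1
     @[a --> +oo] --> (0 : R))
  /\
  ((choi_infid V a - omega * sqmod (V 0 1) / (4 * (omega * a ^+ 2)))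
     / (omega * a ^+ 2)^-1
     @[a --> +oo] --> (0 : R)).
Proof.
move=> U omega0; split.
- apply: (@cvg_pinfty0_sqr_bound _ _ 40) => a a1.
  have a_neq0 : a != 0 by rewrite gt_eqF // (lt_le_trans ltr01).
  rewrite (_ : _ / _ = a ^+ 2 * choi_infid V a - sqmod (V 0 1) / 4); last by field.
  exact: choi_infid_estimate.
- apply: (@cvg_pinfty0_sqr_bound _ _ (omega * 40)) => a a1.
  have a_neq0 : a != 0 by rewrite gt_eqF // (lt_le_trans ltr01).
  rewrite (_ : _ / _ = omega * (a ^+ 2 * choi_infid V a - sqmod (V 0 1) / 4)).
    by rewrite normrM gtr0_norm // -mulrA ler_pM2l // choi_infid_estimate.
  by field; rewrite (lt0r_neq0 omega0) a_neq0.
Qed.
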